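(* Let $$\mathrm{V}(\ell,u)=\frac12\int_\ell^{\pi/2}\mathrm{Im}\,\log\frac{1-i\sqrt{u^2/\sin^2\sigma-1}}{1+i\sqrt{u^2/\sin^2\sigma-1}}\,\mathrm{d}\sigma,\qquad \ell\in\mathbb{R},\ u\in\mathbb{R}\setminus\{0\}.$$ Then: (i) $\mathrm{V}$ is continuous and almost everywhere differentiable on its domain; and for all $\ell\in\mathbb{R}$, $u\neq 0$: (ii) $\mathrm{V}(\ell,u)=\mathrm{V}(\ell,-u)$; (iii) $\mathrm{V}(\pi-\ell,u)=-\mathrm{V}(\ell,u)$; (iv) $\mathrm{V}(\ell,u)+\mathrm{V}(-\ell,u)=2\,\mathrm{V}(0,u)$; (v) $\mathrm{V}(\ell+k\pi,u)=\mathrm{V}(\ell,u)-2k\,\mathrm{V}(0,u)$ for all $k\in\mathbb{Z}$.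
   Context: The square root is the principal one ($\sqrt{x}=i\sqrt{|x|}$ for $x<0$) and $\log$ is the principal logarithm with branch cut along $(-\infty,0]$ (imaginary part in $(-\pi,\pi]$). The integrand is defined for $\sin\sigma\neq0$, i.e. almost everywhere. *)

From Stdlib Require Import Reals Lra.
From Coquelicot Require Import Coquelicot.
Open Scope R_scope.

Definition Csqrt_real (x : R) : C :=
  if Rle_dec 0 x then (sqrt x, 0) else (0, sqrt (- x)).

(* Principal argument in (-PI, PI]; this is Im of the principal logarithm
   (branch cut along (-oo,0]).  Value at 0 is irrelevant (log 0 undefined). *)
Definition Carg (z : C) : R :=
  let a := fst z in let b := snd z in
  if Rlt_dec 0 a then atan (b / a)
  else if Rlt_dec a 0 then
    (if Rle_dec 0 b then atan (b / a) + PI else atan (b / a) - PI)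
  else if Rlt_dec 0 b then PI / 2
  else if Rlt_dec b 0 then - (PI / 2)
  else 0.

Definition Imlog (z : C) : R := Carg z.

Definition Ci : C := (0, 1).

Definition Vintegrand (u s : R) : R :=
  let w := Csqrt_real (u ^ 2 / (sin s) ^ 2 - 1) in
  Imlog (Cdiv (Cminus 1 (Cmult Ci w)) (Cplus 1 (Cmult Ci w))).

Definition V (l u : R) : R := / 2 * RInt (Vintegrand u) l (PI / 2).

(* Lebesgue-null subset of R^2: for every eps > 0 it is covered by countably many
   closed rectangles of total area at most eps. *)
Definition null2 (A : R * R -> Prop) : Prop :=
  forall eps : R, 0 < eps ->
  exists a b c d : nat -> R,
    (forall n, a n <= b n /\ c n <= d n) /\
    (forall p, A p -> exists n, a n <= fst p <= b n /\ c n <= snd p <= d n) /\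
    (forall N, sum_f_R0 (fun n => (b n - a n) * (d n - c n)) N <= eps).

Definition V2 (p : R * R) : R := V (fst p) (snd p).

From Stdlib Require Import Reals Lra Lia.
From Coquelicot Require Import Coquelicot.
Open Scope R_scope.

(* For u <> 0 and sin s <> 0 the integrand equals -2 acos (|sin s| / |u|): the argument of the
   Cayley transform (1 - i w) / (1 + i w) is -2 atan w for real w >= 0, and 0 for w = i t with
   0 <= t < 1.  This closed form is even and PI-periodic in s, invariant under s -> PI - s and even
   in u, so (ii)-(v) follow by affine changes of variables.  It is jointly continuous, and smooth in
   u except where |sin s| = |u|.  For |r| < PI/2 the substitution t = sin s / u turns the integral
   over [0, r] into one whose integrand is smooth in u, and for |u| > 1 the closed form itself is
   smooth in u; reducing l modulo PI, V is therefore differentiable in u off u = 1 and u = -1.  Since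
   the l-derivative of V is continuous, V is jointly differentiable there, and the two exceptional
   lines are null. *)

Lemma acos_ge1 (y : R) : 1 <= y -> acos y = 0.
Proof.
  intros H. unfold acos. destruct (Rle_dec y (-1)); [lra|].
  destruct (Rle_dec 1 y); [reflexivity | lra].
Qed.

Lemma locally_Rabs (x : R) (P : R -> Prop) :
  (exists d : posreal, forall y, Rabs (y - x) < d -> P y) -> locally x P.
Proof. intros [d Hd]. exists d. exact Hd. Qed.

Lemma continuity_pt_acos (y : R) : -1 < y -> continuity_pt acos y.
Proof.
  intros Hy. destruct (Rlt_le_dec y 1) as [H1|[H1|<-]].
  - apply derivable_continuous_pt, derivable_pt_acos; lra.
  - apply continuity_pt_locally. intros eps.
    apply locally_Rabs. exists (mkposreal (y - 1) ltac:(lra)). intros x Hx.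
    apply Rabs_lt_between in Hx. simpl in Hx.
    rewrite !acos_ge1 by lra. rewrite Rminus_0_r, Rabs_R0. apply cond_pos.
  - apply continuity_pt_locally. intros eps.
    set (e := Rmin eps (PI / 2)).
    assert (Hp := PI_RGT_0).
    assert (He : 0 < e) by (apply Rmin_glb_lt; [apply cond_pos | lra]).
    assert (Hee : e <= eps) by apply Rmin_l.
    assert (Hep : e <= PI / 2) by apply Rmin_r.
    assert (Hc : cos e < 1) by (rewrite <- cos_0; apply cos_decreasing_1; lra).
    apply locally_Rabs. exists (mkposreal (1 - cos e) ltac:(lra)). intros x Hx.
    apply Rabs_lt_between in Hx. simpl in Hx.
    rewrite acos_1, Rminus_0_r.
    destruct (Rle_lt_dec 1 x) as [Hx1|Hx1].
    + rewrite acos_ge1, Rabs_R0 by exact Hx1. apply cond_pos.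
    + assert (Hb := acos_bound x). rewrite Rabs_pos_eq by lra.
      apply Rlt_le_trans with e; [|exact Hee].
      assert (0 <= cos e) by (apply cos_ge_0; lra).
      apply Rnot_le_lt. intros Hle.
      assert (Hcx : cos (acos x) <= cos e) by (apply cos_decr_1; lra).
      rewrite cos_acos in Hcx by lra. lra.
Qed.

Lemma is_derive_acos (x : R) : -1 < x < 1 -> is_derive acos x (- 1 / sqrt (1 - x ^ 2)).
Proof.
  intros H. apply is_derive_Reals.
  apply derive_pt_eq_1 with (derivable_pt_acos x H).
  rewrite derive_pt_acos. unfold Rsqr. do 3 f_equal. ring.
Qed.

Lemma locally_neq0 (u0 : R) : u0 <> 0 -> locally u0 (fun u => u <> 0).
Proof.
  intros Hu. apply locally_Rabs. exists (mkposreal (Rabs u0) ltac:(apply Rabs_pos_lt, Hu)).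
  intros y Hy ->. simpl in Hy. rewrite Rminus_0_l, Rabs_Ropp in Hy. lra.
Qed.

Lemma locally_2d_pos (f : R -> R -> R) (x y : R) :
  continuity_2d_pt f x y -> 0 < f x y -> locally_2d (fun u v => 0 < f u v) x y.
Proof.
  intros Hc Hp. destruct (Hc (mkposreal _ Hp)) as [d Hd].
  exists d. intros u v Hu Hv. specialize (Hd u v Hu Hv). simpl in Hd.
  apply Rabs_lt_between in Hd. lra.
Qed.

Lemma locally_2d_fst (P : R -> R -> Prop) (x y : R) :
  locally_2d P x y -> locally x (fun u => P u y).
Proof.
  intros [d Hd]. apply locally_Rabs. exists d. intros u Hu. apply Hd; [exact Hu|].
  rewrite Rminus_eq_0, Rabs_R0. apply cond_pos.
Qed.

Lemma continuity_2d_pt_continuous (f : R -> R -> R) (x y : R) :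
  continuity_2d_pt f x y -> continuous (f x) y.
Proof.
  intros Hc. apply continuity_pt_filterlim, continuity_pt_locally. intros eps.
  destruct (Hc eps) as [d Hd]. apply locally_Rabs. exists d. intros t Ht.
  apply Hd; [rewrite Rminus_eq_0, Rabs_R0; apply cond_pos | exact Ht].
Qed.

Lemma ex_derive_continuity_pt (f : R -> R) (x : R) : ex_derive f x -> continuity_pt f x.
Proof.
  intros H. apply continuity_pt_filterlim.
  apply (ex_derive_continuous (K := R_AbsRing) (V := R_NormedModule)), H.
Qed.

Lemma ex_derive_even (F : R -> R) (u0 : R) :
  (forall u, F (- u) = F u) -> ex_derive F (- u0) -> ex_derive F u0.
Proof.
  intros He [l Hl]. exists (scal (-1) l).
  apply is_derive_ext with (fun u => F (- u)); [intros; apply He|].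
  apply (is_derive_comp F (fun u => - u) u0 l (-1)); [exact Hl|].
  auto_derive; [exact Logic.I | ring].
Qed.

Lemma RInt_linear_approx (f : R -> R) (x0 x c M : R) :
  ex_RInt f x0 x ->
  (forall t, Rmin x0 x <= t <= Rmax x0 x -> Rabs (f t - c) <= M) ->
  Rabs (RInt f x0 x - c * (x - x0)) <= M * Rabs (x - x0).
Proof.
  intros Hex Hb.
  assert (H1 : is_RInt f x0 x (RInt f x0 x)) by (apply (RInt_correct (V := R_CompleteNormedModule)); auto).
  assert (H2 : is_RInt (fun _ => c) x0 x (scal (x - x0) c)) by apply (is_RInt_const (V := R_NormedModule)).
  assert (H : norm (minus (RInt f x0 x) (scal (x - x0) c)) <= Rabs (x - x0) * M).
  { apply norm_RInt_le_const_abs with (fun t => minus (f t) c); [exact Hb|].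
    exact (is_RInt_minus _ _ _ _ _ _ H1 H2). }
  revert H. unfold norm, minus, plus, opp, scal; simpl. unfold abs, mult; simpl.
  replace (RInt f x0 x - c * (x - x0)) with (RInt f x0 x + - ((x - x0) * c)) by ring.
  rewrite (Rmult_comm M). exact (fun H => H).
Qed.

Lemma is_derive_linear_approx (g : R -> R) (u0 c : R) : is_derive g u0 c ->
  forall eps : posreal, exists d : posreal, forall u, Rabs (u - u0) < d ->
    Rabs (g u - g u0 - c * (u - u0)) <= eps * Rabs (u - u0).
Proof.
  intros Hd eps. apply is_derive_Reals in Hd.
  destruct (Hd eps (cond_pos eps)) as [d Hdd].
  exists d. intros u Hu.
  destruct (Req_dec u u0) as [->|E].
  - rewrite !Rminus_diag, Rmult_0_r, Rminus_0_r, Rabs_R0. lra.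
  - specialize (Hdd (u - u0) ltac:(lra) Hu). replace (u0 + (u - u0)) with u in Hdd by ring.
    replace (g u - g u0 - c * (u - u0)) with (((g u - g u0) / (u - u0) - c) * (u - u0)) by (field; lra).
    rewrite Rabs_mult. apply Rmult_le_compat_r; [apply Rabs_pos | lra].
Qed.

(* Split the integral at x0: over [x0, x] it is h u0 x0 (x - x0) up to o(|x - x0|) by joint
   continuity of h, and over [a, x0] the u-derivative takes over. *)
Lemma differentiable_pt_lim_RInt_param (h : R -> R -> R) (a x0 u0 c : R) :
  locally_2d (fun u x => ex_RInt (h u) a x) u0 x0 ->
  continuity_2d_pt h u0 x0 ->
  is_derive (fun u => RInt (h u) a x0) u0 c ->
  differentiable_pt_lim (fun x u => RInt (h u) a x) x0 u0 (h u0 x0) c.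
Proof.
  intros Hex Hc Hd eps.
  assert (He2 : 0 < eps / 2) by (assert (H := cond_pos eps); lra).
  destruct (Hc (mkposreal _ He2)) as [d1 Hd1].
  destruct (is_derive_linear_approx _ _ _ Hd (mkposreal _ He2)) as [d2 Hd2].
  destruct Hex as [d3 Hd3].
  set (d := Rmin d1 (Rmin d2 d3)).
  assert (Hdd1 : d <= d1) by apply Rmin_l.
  assert (Hdd2 : d <= d2) by (eapply Rle_trans; [apply Rmin_r | apply Rmin_l]).
  assert (Hdd3 : d <= d3) by (eapply Rle_trans; [apply Rmin_r | apply Rmin_r]).
  assert (Hd0 : 0 < d) by (repeat apply Rmin_glb_lt; apply cond_pos).
  exists (mkposreal d Hd0). simpl. intros x u Hx Hu.
  assert (E1 : ex_RInt (h u) a x) by (apply Hd3; lra).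
  assert (E0 : ex_RInt (h u) a x0)
    by (apply Hd3; [lra | rewrite Rminus_eq_0, Rabs_R0; apply cond_pos]).
  assert (E2 : ex_RInt (h u) x0 x).
  { apply (ex_RInt_Chasles (V := R_NormedModule)) with a; [|exact E1].
    apply (ex_RInt_swap (V := R_NormedModule)), E0. }
  rewrite <- (RInt_Chasles (V := R_CompleteNormedModule) (h u) a x0 x E0 E2).
  assert (B1 : Rabs (RInt (h u) x0 x - h u0 x0 * (x - x0)) <= eps / 2 * Rabs (x - x0)).
  { apply RInt_linear_approx; [exact E2|]. intros t Ht. left. apply Hd1; [lra|].
    apply Rle_lt_trans with (Rabs (x - x0)); [|lra].
    destruct (Rle_lt_dec x0 x).
    - rewrite Rmin_left, Rmax_right in Ht by lra. rewrite !Rabs_pos_eq; lra.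
    - rewrite Rmin_right, Rmax_left in Ht by lra. rewrite !Rabs_left1; lra. }
  assert (B2 := Hd2 u ltac:(lra)). simpl in B2.
  assert (Rabs (x - x0) <= Rmax (Rabs (x - x0)) (Rabs (u - u0))) by apply Rmax_l.
  assert (Rabs (u - u0) <= Rmax (Rabs (x - x0)) (Rabs (u - u0))) by apply Rmax_r.
  replace (plus (RInt (h u) a x0) (RInt (h u) x0 x) - RInt (h u0) a x0
           - (h u0 x0 * (x - x0) + c * (u - u0)))
    with ((RInt (h u) x0 x - h u0 x0 * (x - x0)) + (RInt (h u) a x0 - RInt (h u0) a x0 - c * (u - u0)))
    by (unfold plus; simpl; ring).
  eapply Rle_trans; [apply Rabs_triang|].
  assert (Hep := cond_pos eps). nra.
Qed.

Section OffGrid.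

Variables (f g : R -> R) (h : R).
Hypothesis h_pos : 0 < h.
Hypothesis f_eq_g_off_grid : forall x, (forall k : Z, x <> IZR k * h) -> f x = g x.
Hypothesis ex_RInt_g : forall a b, ex_RInt g a b.

Lemma is_RInt_off_grid_cell (m : Z) (a b : R) :
  IZR m * h <= a <= b -> b <= (IZR m + 1) * h -> is_RInt f a b (RInt g a b).
Proof.
  intros Ha Hb. apply is_RInt_ext with g; [| apply (RInt_correct (V := R_CompleteNormedModule)), ex_RInt_g].
  intros x Hx. rewrite Rmin_left, Rmax_right in Hx by lra.
  symmetry. apply f_eq_g_off_grid. intros k ->.
  assert (IZR m < IZR k < IZR m + 1) as [Hl Hr] by (split; apply Rmult_lt_reg_r with h; lra).
  rewrite <- plus_IZR in Hr. apply lt_IZR in Hl, Hr. lia.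
Qed.

Lemma is_RInt_off_grid_cells (n : nat) : forall (m : Z) (a b : R),
  IZR m * h <= a <= b -> b <= (IZR m + INR n) * h -> is_RInt f a b (RInt g a b).
Proof.
  induction n as [|n IH]; intros m a b Hab Hb.
  - apply (is_RInt_off_grid_cell m); simpl in Hb; lra.
  - remember ((IZR m + 1) * h) as c eqn:Hc.
    assert (IHc : forall a, c <= a <= b -> is_RInt f a b (RInt g a b)).
    { intros a' Ha'. rewrite S_INR in Hb.
      apply (IH (m + 1)%Z); rewrite plus_IZR; lra. }
    destruct (Rle_lt_dec c a) as [Hca|Hac]; [apply IHc; lra|].
    destruct (Rle_lt_dec b c) as [Hbc|Hcb]; [apply (is_RInt_off_grid_cell m); lra|].
    rewrite <- (RInt_Chasles g a c b) by apply ex_RInt_g.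
    apply (is_RInt_Chasles f a c b); [apply (is_RInt_off_grid_cell m) | apply IHc]; lra.
Qed.

Lemma is_RInt_off_grid (a b : R) : is_RInt f a b (RInt g a b).
Proof.
  assert (Hle : forall a b, a <= b -> is_RInt f a b (RInt g a b)).
  { clear a b. intros a b Hab.
    set (m := Zfloor (a / h)).
    assert (Hm : IZR m * h <= a).
    { destruct (Zfloor_bound (a / h)) as [H _].
      apply Rmult_le_compat_r with (r := h) in H; [|lra].
      unfold Rdiv in H. rewrite Rmult_assoc, Rinv_l, Rmult_1_r in H by lra. exact H. }
    destruct (nfloor_ex ((b - IZR m * h) / h)) as [n [_ Hn]].
    { apply Rdiv_le_0_compat; lra. }
    apply (is_RInt_off_grid_cells (S n) m); [lra|].
    apply Rmult_lt_compat_r with (r := h) in Hn; [|lra].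
    unfold Rdiv in Hn. rewrite Rmult_assoc, Rinv_l, Rmult_1_r in Hn by lra.
    rewrite S_INR. lra. }
  destruct (Rle_lt_dec a b) as [H|H]; [auto|].
  rewrite <- opp_RInt_swap by apply ex_RInt_g.
  exact (is_RInt_swap _ _ _ _ (Hle b a ltac:(lra))).
Qed.

End OffGrid.

(** * The integrand in closed form *)

Lemma tan_2atan (w : R) : 0 <= w -> w <> 1 -> tan (2 * atan w) = 2 * w / (1 - w * w).
Proof.
  intros Hw H1.
  assert (Hb := atan_bound w).
  assert (Hc : cos (atan w) <> 0) by (apply Rgt_not_eq, cos_gt_0; lra).
  assert (Ht : tan (atan w) = w) by apply atan_right_inv.
  rewrite tan_2a; [rewrite Ht; reflexivity | exact Hc | | rewrite Ht; intro E; apply H1; nra].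
  assert (Hsc : sin (atan w) = w * cos (atan w)).
  { rewrite <- Ht at 2. unfold tan. field. exact Hc. }
  assert (Hs := sin2_cos2 (atan w)). unfold Rsqr in Hs. rewrite Hsc in Hs.
  rewrite cos_2a_cos. intro E. apply H1. nra.
Qed.

Lemma atan_double_lt1 (w : R) : 0 <= w < 1 -> atan (2 * w / (1 - w * w)) = 2 * atan w.
Proof.
  intros Hw. rewrite <- tan_2atan by lra. apply atan_tan.
  assert (0 <= atan w).
  { rewrite <- atan_0. destruct (Req_dec w 0) as [->|]; [lra|]. left; apply atan_increasing; lra. }
  assert (atan w < PI / 4) by (rewrite <- atan_1; apply atan_increasing; lra).
  assert (Hp := PI_RGT_0). lra.
Qed.

Lemma atan_double_gt1 (w : R) : 1 < w -> atan (2 * w / (1 - w * w)) = 2 * atan w - PI.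
Proof.
  intros Hw. rewrite <- tan_2atan by lra.
  assert (PI / 4 < atan w) by (rewrite <- atan_1; apply atan_increasing; lra).
  assert (Hb := atan_bound w).
  replace (2 * atan w) with (PI + (2 * atan w - PI)) at 1 by ring.
  rewrite Rtrigo_facts.tan_pi_plus by (apply Rgt_not_eq, cos_gt_0; lra).
  apply atan_tan; lra.
Qed.

Definition Cayley (w : C) : C := Cdiv (Cminus 1 (Cmult Ci w)) (Cplus 1 (Cmult Ci w)).

Lemma Vintegrand_Cayley (u s : R) :
  Vintegrand u s = Carg (Cayley (Csqrt_real (u ^ 2 / sin s ^ 2 - 1))).
Proof. reflexivity. Qed.

Lemma Cayley_real (w : R) :
  Cayley (w, 0) = ((1 - w * w) / (1 + w * w), - (2 * w) / (1 + w * w)).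
Proof.
  assert (0 < 1 + w * w) by nra.
  unfold Cayley, Cdiv, Cminus, Cplus, Cmult, Cinv, Ci, Copp; simpl.
  apply injective_projections; simpl; field; lra.
Qed.

Lemma Cayley_imag (t : R) : t <> 1 -> Cayley (0, t) = ((1 + t) / (1 - t), 0).
Proof.
  intros Ht. unfold Cayley, Cdiv, Cminus, Cplus, Cmult, Cinv, Ci, Copp; simpl.
  apply injective_projections; simpl; field; lra.
Qed.

Lemma Carg_Cayley_real (w : R) : 0 <= w -> Carg (Cayley (w, 0)) = -2 * atan w.
Proof.
  intros Hw. assert (Hd : 0 < 1 + w * w) by nra.
  rewrite Cayley_real. unfold Carg; simpl.
  destruct (Rlt_le_dec w 1) as [H1|[H1|H1]].
  - assert (Hx : 0 < (1 - w * w) / (1 + w * w)) by (apply Rdiv_lt_0_compat; nra).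
    destruct (Rlt_dec 0 _) as [_|]; [|contradiction].
    replace (- (2 * w) / (1 + w * w) / ((1 - w * w) / (1 + w * w)))
      with (- (2 * w / (1 - w * w))) by (field; nra).
    rewrite atan_opp, atan_double_lt1; lra.
  - assert (Hx : (1 - w * w) / (1 + w * w) < 0)
      by (apply Rlt_div_l; [lra | rewrite Rmult_0_l; nra]).
    assert (Hy : - (2 * w) / (1 + w * w) < 0)
      by (apply Rlt_div_l; [lra | rewrite Rmult_0_l; lra]).
    destruct (Rlt_dec 0 _); [lra|]. destruct (Rlt_dec _ 0); [|lra].
    destruct (Rle_dec 0 _); [lra|].
    replace (- (2 * w) / (1 + w * w) / ((1 - w * w) / (1 + w * w)))
      with (- (2 * w / (1 - w * w))) by (field; split; nra).
    rewrite atan_opp, atan_double_gt1; lra.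
  - subst w. rewrite atan_1.
    replace ((1 - 1 * 1) / (1 + 1 * 1)) with 0 by field.
    replace (- (2 * 1) / (1 + 1 * 1)) with (-1) by field.
    destruct (Rlt_dec 0 0); [lra|]. destruct (Rlt_dec 0 0); [lra|].
    destruct (Rlt_dec 0 (-1)); [lra|]. destruct (Rlt_dec (-1) 0); lra.
Qed.

Lemma Carg_Cayley_imag (t : R) : 0 <= t < 1 -> Carg (Cayley (0, t)) = 0.
Proof.
  intros Ht. rewrite Cayley_imag by lra. unfold Carg; simpl.
  destruct (Rlt_dec 0 _) as [_|H]; [|exfalso; apply H, Rdiv_lt_0_compat; lra].
  unfold Rdiv. rewrite Rmult_0_l. apply atan_0.
Qed.

(* Where |sin s| > |u| this is 0 because Stdlib's acos is 0 beyond 1 (acos_ge1), as is the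
   integrand there. *)
Definition Vc (u s : R) : R := -2 * acos (Rabs (sin s) / Rabs u).

Lemma Vintegrand_closed_form (u s : R) : u <> 0 -> sin s <> 0 -> Vintegrand u s = Vc u s.
Proof.
  intros Hu Hs. rewrite Vintegrand_Cayley. unfold Vc, Csqrt_real.
  set (q := Rabs (sin s) / Rabs u).
  assert (Hq : 0 < q) by (apply Rdiv_lt_0_compat; apply Rabs_pos_lt; assumption).
  replace (u ^ 2 / sin s ^ 2 - 1) with ((1 - q ^ 2) / q ^ 2).
  2:{ unfold q. rewrite <- (pow2_abs u), <- (pow2_abs (sin s)).
      assert (Rabs u <> 0) by (apply Rabs_no_R0; assumption).
      assert (Rabs (sin s) <> 0) by (apply Rabs_no_R0; assumption).
      field. split; assumption. }
  assert (Hq2 : 0 < q ^ 2) by (apply pow_lt; lra).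
  destruct (Rle_dec 0 ((1 - q ^ 2) / q ^ 2)) as [H|H].
  - rewrite Carg_Cayley_real by apply sqrt_pos. f_equal.
    rewrite acos_atan by lra. f_equal.
    rewrite sqrt_div_alt by lra. replace (q ^ 2) with q² by (unfold Rsqr; ring).
    rewrite sqrt_Rsqr by lra. reflexivity.
  - assert (Hq1 : 1 < q).
    { apply Rnot_le_lt. intro. apply H, Rdiv_le_0_compat; nra. }
    rewrite acos_ge1 by lra. rewrite Carg_Cayley_imag; [ring|].
    split; [apply sqrt_pos|]. apply Rlt_le_trans with (sqrt 1); [apply sqrt_lt_1_alt | rewrite sqrt_1; lra].
    replace (- ((1 - q ^ 2) / q ^ 2)) with (1 - / q ^ 2) by (field; lra).
    assert (0 < / q ^ 2 < 1) by (split; [apply Rinv_0_lt_compat; lra | rewrite <- Rinv_1; apply Rinv_lt_contravar; nra]).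
    lra.
Qed.

Lemma continuity_2d_pt_abs_sin (x y : R) : continuity_2d_pt (fun _ t => Rabs (sin t)) x y.
Proof.
  apply continuity_1d_2d_pt_comp with (g := fun _ t => sin t); [apply Rcontinuity_abs|].
  apply continuity_1d_2d_pt_comp with (g := fun _ t => t); [apply continuity_sin|].
  apply continuity_2d_pt_id2.
Qed.

Lemma Vc_continuity_2d (u s : R) : u <> 0 -> continuity_2d_pt Vc u s.
Proof.
  intros Hu. unfold Vc.
  apply continuity_2d_pt_mult; [apply continuity_2d_pt_const|].
  apply continuity_1d_2d_pt_comp with (g := fun u s => Rabs (sin s) / Rabs u).
  - apply continuity_pt_acos.
    assert (0 <= Rabs (sin s) / Rabs u)
      by (apply Rdiv_le_0_compat; [apply Rabs_pos | apply Rabs_pos_lt; exact Hu]).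
    lra.
  - apply continuity_2d_pt_mult; [apply continuity_2d_pt_abs_sin|].
    apply continuity_2d_pt_inv; [|apply Rabs_no_R0; exact Hu].
    apply continuity_1d_2d_pt_comp with (g := fun u _ => u);
      [apply Rcontinuity_abs | apply continuity_2d_pt_id1].
Qed.

Definition Ic (u a b : R) : R := RInt (Vc u) a b.

Lemma ex_RInt_Vc (u a b : R) : u <> 0 -> ex_RInt (Vc u) a b.
Proof.
  intros Hu. apply (ex_RInt_continuous (V := R_CompleteNormedModule)). intros s _.
  apply continuity_2d_pt_continuous, Vc_continuity_2d, Hu.
Qed.

Lemma V_Ic (l u : R) : u <> 0 -> V l u = / 2 * Ic u l (PI / 2).
Proof.
  intros Hu. unfold V, Ic. f_equal. apply is_RInt_unique.
  apply (is_RInt_off_grid _ _ PI PI_RGT_0).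
  - intros x Hx. apply Vintegrand_closed_form; [exact Hu|].
    intros Hs. destruct (sin_eq_0_0 x Hs) as [k Hk]. exact (Hx k Hk).
  - intros a b. apply ex_RInt_Vc, Hu.
Qed.

Lemma Vc_bound (u s : R) : Rabs (Vc u s) <= 2 * PI.
Proof.
  unfold Vc. assert (Hb := acos_bound (Rabs (sin s) / Rabs u)).
  rewrite Rabs_mult, (Rabs_left (-2)), (Rabs_pos_eq (acos _)); lra.
Qed.

Lemma Ic_bound (u a b : R) : u <> 0 -> Rabs (Ic u a b) <= 2 * PI * Rabs (b - a).
Proof.
  intros Hu.
  assert (Hle : forall a b, a <= b -> Rabs (Ic u a b) <= 2 * PI * (b - a)).
  { clear a b. intros a b Hab. rewrite Rmult_comm.
    apply abs_RInt_le_const; [exact Hab | apply ex_RInt_Vc, Hu | intros; apply Vc_bound]. }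
  destruct (Rle_lt_dec a b) as [Hab|Hab].
  - rewrite (Rabs_pos_eq (b - a)) by lra. apply Hle, Hab.
  - unfold Ic. rewrite <- opp_RInt_swap by (apply ex_RInt_Vc, Hu).
    rewrite Rabs_Ropp, (Rabs_left (b - a)), Ropp_minus_distr by lra. apply Hle. lra.
Qed.

(** * Symmetries *)

Lemma Vc_pi_sub (u s : R) : Vc u (PI - s) = Vc u s.
Proof. unfold Vc. rewrite sin_PI_x. reflexivity. Qed.

Lemma Vc_opp (u s : R) : Vc u (- s) = Vc u s.
Proof. unfold Vc. rewrite sin_neg, Rabs_Ropp. reflexivity. Qed.

Lemma Vc_add_pi (u s : R) : Vc u (s + PI) = Vc u s.
Proof. unfold Vc. rewrite neg_sin, Rabs_Ropp. reflexivity. Qed.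

Lemma Vc_oppu (u s : R) : Vc (- u) s = Vc u s.
Proof. unfold Vc. rewrite Rabs_Ropp. reflexivity. Qed.

Lemma Ic_oppu (u a b : R) : Ic (- u) a b = Ic u a b.
Proof. unfold Ic. apply RInt_ext. intros; apply Vc_oppu. Qed.

Lemma Ic_point (u a : R) : Ic u a a = 0.
Proof. apply (RInt_point (V := R_CompleteNormedModule)). Qed.

Lemma Ic_Chasles (u a b c : R) : u <> 0 -> Ic u a b + Ic u b c = Ic u a c.
Proof. intros Hu. apply (RInt_Chasles (V := R_CompleteNormedModule)); apply ex_RInt_Vc, Hu. Qed.

Lemma Ic_swap (u a b : R) : u <> 0 -> Ic u b a = - Ic u a b.
Proof.
  intros Hu. symmetry. apply (opp_RInt_swap (V := R_CompleteNormedModule)), ex_RInt_Vc, Hu.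
Qed.

Lemma Ic_affine_invariant (u c d a b : R) : u <> 0 ->
  (forall s, Vc u (c * s + d) = Vc u s) -> Ic u (c * a + d) (c * b + d) = c * Ic u a b.
Proof.
  intros Hu Hinv. unfold Ic.
  rewrite <- (RInt_comp_lin (V := R_CompleteNormedModule)) by apply ex_RInt_Vc, Hu.
  rewrite <- (RInt_scal (V := R_CompleteNormedModule)) by apply ex_RInt_Vc, Hu.
  apply RInt_ext. intros s _. simpl. rewrite Hinv. reflexivity.
Qed.

Lemma Ic_pi_sub (u a b : R) : u <> 0 -> Ic u (PI - a) (PI - b) = - Ic u a b.
Proof.
  intros Hu. replace (PI - a) with (-1 * a + PI) by ring. replace (PI - b) with (-1 * b + PI) by ring.
  rewrite Ic_affine_invariant; [ring | exact Hu |].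
  intros s. replace (-1 * s + PI) with (PI - s) by ring. apply Vc_pi_sub.
Qed.

Lemma Ic_opp (u a b : R) : u <> 0 -> Ic u (- a) (- b) = - Ic u a b.
Proof.
  intros Hu. replace (- a) with (-1 * a + 0) by ring. replace (- b) with (-1 * b + 0) by ring.
  rewrite Ic_affine_invariant; [ring | exact Hu |].
  intros s. replace (-1 * s + 0) with (- s) by ring. apply Vc_opp.
Qed.

Lemma Ic_add_pi (u a b : R) : u <> 0 -> Ic u (a + PI) (b + PI) = Ic u a b.
Proof.
  intros Hu. replace (a + PI) with (1 * a + PI) by ring. replace (b + PI) with (1 * b + PI) by ring.
  rewrite Ic_affine_invariant; [ring | exact Hu |].
  intros s. rewrite Rmult_1_l. apply Vc_add_pi.
Qed.

Lemma Ic_period (u l : R) : u <> 0 -> Ic u l (l + PI) = 2 * Ic u 0 (PI / 2).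
Proof.
  intros Hu.
  rewrite <- (Ic_Chasles u l 0), <- (Ic_Chasles u 0 PI), <- (Ic_Chasles u 0 (PI / 2) PI) by exact Hu.
  replace (Ic u PI (l + PI)) with (Ic u 0 l) by (rewrite <- Ic_add_pi, Rplus_0_l by exact Hu; reflexivity).
  replace (Ic u (PI / 2) PI) with (Ic u (PI - PI / 2) (PI - 0)) by (f_equal; field).
  rewrite Ic_pi_sub, (Ic_swap u (PI / 2) 0) by exact Hu.
  rewrite (Ic_swap u 0 l) by exact Hu. ring.
Qed.

Lemma Ic_periods (u l : R) (k : Z) : u <> 0 ->
  Ic u l (l + IZR k * PI) = 2 * IZR k * Ic u 0 (PI / 2).
Proof.
  intros Hu. revert l. induction k as [|k IH|k IH] using Z.peano_ind; intros l.
  - rewrite Rmult_0_l, Rplus_0_r, Ic_point. ring.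
  - rewrite succ_IZR, <- (Ic_Chasles u l (l + IZR k * PI)), IH by exact Hu.
    replace (l + (IZR k + 1) * PI) with (l + IZR k * PI + PI) by ring.
    rewrite Ic_period by exact Hu. ring.
  - rewrite <- Z.sub_1_r, minus_IZR.
    rewrite <- (Ic_Chasles u l (l + IZR k * PI)), IH by exact Hu.
    rewrite (Ic_swap u (l + (IZR k - 1) * PI)) by exact Hu.
    replace (l + IZR k * PI) with (l + (IZR k - 1) * PI + PI) by ring.
    rewrite Ic_period by exact Hu. ring.
Qed.

Lemma V_oppu (l u : R) : V l u = V l (- u).
Proof.
  unfold V. f_equal. apply RInt_ext. intros s _. unfold Vintegrand.
  replace ((- u) ^ 2) with (u ^ 2) by ring. reflexivity.
Qed.

Lemma V_pi_sub (l u : R) : u <> 0 -> V (PI - l) u = - V l u.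
Proof.
  intros Hu. rewrite !V_Ic by exact Hu.
  replace (PI / 2) with (PI - PI / 2) at 1 by field. rewrite Ic_pi_sub by exact Hu. ring.
Qed.

Lemma V_add_opp (l u : R) : u <> 0 -> V l u + V (- l) u = 2 * V 0 u.
Proof.
  intros Hu. rewrite !V_Ic by exact Hu.
  rewrite <- (Ic_Chasles u l 0), <- (Ic_Chasles u (- l) 0) by exact Hu.
  replace (Ic u (- l) 0) with (Ic u (- l) (- 0)) by (f_equal; ring).
  rewrite Ic_opp, (Ic_swap u 0 l) by exact Hu. ring.
Qed.

Lemma V_add_periods (l u : R) (k : Z) : u <> 0 ->
  V (l + IZR k * PI) u = V l u - 2 * IZR k * V 0 u.
Proof.
  intros Hu. rewrite !V_Ic by exact Hu.
  rewrite <- (Ic_Chasles u l (l + IZR k * PI) (PI / 2)), Ic_periods by exact Hu. ring.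
Qed.

(** * Differentiability in u *)

(* Under t = sin s / z, Vsub z t dt is Vc z s ds on (-PI/2, PI/2) (see Ic_subst_sin); unlike Vc,
   it is smooth in z wherever |z t| < 1. *)
Definition Vsub (z t : R) : R := -2 * acos (Rabs t) * (z / sqrt (1 - (z * t) ^ 2)).
Definition Vsub_dz (z t : R) : R :=
  -2 * acos (Rabs t) / ((1 - (z * t) ^ 2) * sqrt (1 - (z * t) ^ 2)).

Lemma is_derive_Vsub (z t : R) : 0 < 1 - (z * t) ^ 2 ->
  is_derive (fun z => Vsub z t) z (Vsub_dz z t).
Proof.
  intros H. unfold Vsub, Vsub_dz.
  assert (Hs := sqrt_lt_R0 _ H). assert (Hss := sqrt_sqrt _ (Rlt_le _ _ H)).
  replace (1 - (z * t) ^ 2) with (1 + - (z * t * (z * t * 1))) in * by ring.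
  auto_derive.
  - repeat split; lra.
  - set (s := sqrt _) in *. rewrite Hss. field. lra.
Qed.

Lemma continuity_2d_pt_one_sub_sq (z t : R) : continuity_2d_pt (fun z t => 1 - (z * t) ^ 2) z t.
Proof.
  apply continuity_2d_pt_ext with (fun z t => 1 - (z * t) * (z * t)); [intros; ring|].
  assert (Hm : continuity_2d_pt (fun z t => z * t) z t)
    by (apply continuity_2d_pt_mult; [apply continuity_2d_pt_id1 | apply continuity_2d_pt_id2]).
  apply continuity_2d_pt_minus; [apply continuity_2d_pt_const | apply continuity_2d_pt_mult; exact Hm].
Qed.

Lemma continuity_2d_pt_acos_abs (z t : R) : continuity_2d_pt (fun _ t => acos (Rabs t)) z t.
Proof.
  apply continuity_1d_2d_pt_comp with (g := fun _ t => Rabs t).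
  - apply continuity_pt_acos. assert (H := Rabs_pos t). lra.
  - apply continuity_1d_2d_pt_comp with (g := fun _ t => t);
      [apply Rcontinuity_abs | apply continuity_2d_pt_id2].
Qed.

Lemma continuity_2d_pt_sqrt_one_sub_sq (z t : R) : 0 < 1 - (z * t) ^ 2 ->
  continuity_2d_pt (fun z t => sqrt (1 - (z * t) ^ 2)) z t.
Proof.
  intros H. apply continuity_1d_2d_pt_comp with (g := fun z t => 1 - (z * t) ^ 2);
    [apply continuity_pt_sqrt; lra | apply continuity_2d_pt_one_sub_sq].
Qed.

Lemma Vsub_continuity_2d (z t : R) : 0 < 1 - (z * t) ^ 2 -> continuity_2d_pt Vsub z t.
Proof.
  intros H. unfold Vsub.
  assert (Hs := sqrt_lt_R0 _ H).
  apply continuity_2d_pt_mult;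
    [apply continuity_2d_pt_mult; [apply continuity_2d_pt_const | apply continuity_2d_pt_acos_abs]|].
  apply continuity_2d_pt_mult; [apply continuity_2d_pt_id1|].
  apply continuity_2d_pt_inv; [apply continuity_2d_pt_sqrt_one_sub_sq, H | lra].
Qed.

Lemma Vsub_dz_continuity_2d (z t : R) : 0 < 1 - (z * t) ^ 2 -> continuity_2d_pt Vsub_dz z t.
Proof.
  intros H. unfold Vsub_dz, Rdiv.
  assert (Hs := sqrt_lt_R0 _ H).
  apply continuity_2d_pt_mult;
    [apply continuity_2d_pt_mult; [apply continuity_2d_pt_const | apply continuity_2d_pt_acos_abs]|].
  apply continuity_2d_pt_inv; [|apply Rgt_not_eq, Rmult_lt_0_compat; lra].
  apply continuity_2d_pt_mult;
    [apply continuity_2d_pt_one_sub_sq | apply continuity_2d_pt_sqrt_one_sub_sq, H].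
Qed.

Lemma one_sub_sq_pos_between (z y t : R) :
  Rmin 0 y <= t <= Rmax 0 y -> 0 < 1 - (z * y) ^ 2 -> 0 < 1 - (z * t) ^ 2.
Proof.
  intros Ht H.
  assert (t * t <= y * y).
  { destruct (Rle_lt_dec 0 y).
    - rewrite Rmin_left, Rmax_right in Ht by lra. nra.
    - rewrite Rmin_right, Rmax_left in Ht by lra. nra. }
  assert ((z * z) * (t * t) <= (z * z) * (y * y)) by (apply Rmult_le_compat_l; nra).
  nra.
Qed.

Lemma ex_RInt_Vsub (z y : R) : 0 < 1 - (z * y) ^ 2 -> ex_RInt (Vsub z) 0 y.
Proof.
  intros H. apply (ex_RInt_continuous (V := R_CompleteNormedModule)). intros t Ht.
  apply continuity_2d_pt_continuous, Vsub_continuity_2d.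
  eapply one_sub_sq_pos_between; eauto.
Qed.

Lemma is_derive_RInt_Vsub (z0 y0 : R) : 0 < 1 - (z0 * y0) ^ 2 ->
  is_derive (fun z => RInt (Vsub z) 0 y0) z0 (RInt (Vsub_dz z0) 0 y0).
Proof.
  intros H.
  assert (Hloc2 := locally_2d_pos _ _ _ (continuity_2d_pt_one_sub_sq z0 y0) H).
  assert (Hloc := locally_2d_fst _ _ _ Hloc2). simpl in Hloc.
  replace (RInt (Vsub_dz z0) 0 y0) with (RInt (fun t => Derive (fun z => Vsub z t) z0) 0 y0).
  2:{ apply RInt_ext. intros t Ht. apply is_derive_unique, is_derive_Vsub.
      eapply one_sub_sq_pos_between; [split; apply Rlt_le, Ht | exact H]. }
  apply (is_derive_RInt_param Vsub).
  - eapply filter_imp; [|exact Hloc]. intros z Hz t Ht.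
    eexists. apply is_derive_Vsub. eapply one_sub_sq_pos_between; eauto.
  - intros t Ht. assert (Ht' : 0 < 1 - (z0 * t) ^ 2) by (eapply one_sub_sq_pos_between; eauto).
    apply continuity_2d_pt_ext_loc with Vsub_dz; [|apply Vsub_dz_continuity_2d, Ht'].
    eapply locally_2d_impl; [|exact (locally_2d_pos _ _ _ (continuity_2d_pt_one_sub_sq z0 t) Ht')].
    apply locally_2d_forall. intros z v Hzv. symmetry. apply is_derive_unique, is_derive_Vsub, Hzv.
  - eapply filter_imp; [|exact Hloc]. intros z Hz. apply ex_RInt_Vsub, Hz.
Qed.

Lemma differentiable_pt_lim_RInt_Vsub (z0 y0 : R) : 0 < 1 - (z0 * y0) ^ 2 ->
  differentiable_pt_lim (fun y z => RInt (Vsub z) 0 y) y0 z0 (Vsub z0 y0) (RInt (Vsub_dz z0) 0 y0).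
Proof.
  intros H. apply differentiable_pt_lim_RInt_param.
  - destruct (locally_2d_pos _ _ _ (continuity_2d_pt_one_sub_sq z0 y0) H) as [d Hd].
    exists d. intros z y Hz Hy. apply ex_RInt_Vsub, Hd; assumption.
  - apply Vsub_continuity_2d, H.
  - apply is_derive_RInt_Vsub, H.
Qed.

Lemma Ic_subst_sin (u r : R) : 0 < u -> - (PI / 2) < r < PI / 2 ->
  Ic u 0 r = RInt (Vsub u) 0 (sin r / u).
Proof.
  intros Hu Hr.
  assert (Hcos : forall x, Rmin 0 r <= x <= Rmax 0 r -> 0 < cos x).
  { intros x Hx. apply cos_gt_0; destruct (Rle_lt_dec 0 r).
    all: try rewrite Rmin_left, Rmax_right in Hx by lra.
    all: try rewrite Rmin_right, Rmax_left in Hx by lra. all: lra. }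
  assert (Hsq : forall x, 1 - (u * (sin x / u)) ^ 2 = cos x ^ 2).
  { intros x. replace (u * (sin x / u)) with (sin x) by (field; lra).
    rewrite <- (sin2_cos2 x). unfold Rsqr. ring. }
  replace (RInt (Vsub u) 0 (sin r / u)) with (RInt (Vsub u) (sin 0 / u) (sin r / u))
    by (rewrite sin_0; f_equal; field; lra).
  rewrite <- (RInt_comp (V := R_CompleteNormedModule) (Vsub u) (fun y => sin y / u) (fun y => cos y / u)).
  - unfold Ic. apply RInt_ext. intros x Hx.
    assert (Hc := Hcos x ltac:(lra)).
    unfold scal; simpl; unfold mult; simpl. unfold Vsub, Vc.
    rewrite Hsq, sqrt_pow2, Rabs_div, (Rabs_pos_eq u) by lra.
    replace (u * (sin x / u)) with (sin x) by (field; lra). field. lra.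
  - intros x Hx. apply continuity_2d_pt_continuous, Vsub_continuity_2d.
    rewrite Hsq. assert (Hc := Hcos x Hx). nra.
  - intros x Hx. split.
    + auto_derive; [lra | field; lra].
    + apply (ex_derive_continuous (K := R_AbsRing) (V := R_NormedModule) (fun y => cos y / u)).
      auto_derive. lra.
Qed.

Lemma ex_derive_Ic_inner_pos (r u0 : R) : - (PI / 2) < r < PI / 2 -> 0 < u0 ->
  ex_derive (fun u => Ic u 0 r) u0.
Proof.
  intros Hr Hu0.
  assert (Hc := cos_gt_0 r ltac:(lra) ltac:(lra)).
  assert (Hg : 0 < 1 - (u0 * (sin r / u0)) ^ 2).
  { replace (u0 * (sin r / u0)) with (sin r) by (field; lra).
    rewrite <- (sin2_cos2 r). unfold Rsqr. nra. }
  assert (Hy : derivable_pt_lim (fun u => sin r / u) u0 (- sin r / u0 ^ 2))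
    by (apply is_derive_Reals; auto_derive; [lra | field; lra]).
  assert (H := derivable_pt_lim_comp_2d _ _ _ _ _ _ _ _
                 (differentiable_pt_lim_RInt_Vsub _ _ Hg) Hy (derivable_pt_lim_id u0)).
  eexists. apply is_derive_Reals in H.
  apply is_derive_ext_loc with (fun u => RInt (Vsub u) 0 (sin r / u)); [|exact H].
  apply locally_Rabs. exists (mkposreal u0 Hu0). intros u Hu. simpl in Hu.
  apply Rabs_lt_between in Hu. symmetry. apply Ic_subst_sin; lra.
Qed.

Lemma ex_derive_Ic_inner (r u0 : R) : - (PI / 2) < r < PI / 2 -> u0 <> 0 ->
  ex_derive (fun u => Ic u 0 r) u0.
Proof.
  intros Hr Hu0. destruct (Rle_lt_dec u0 0) as [Hn|Hp].
  - apply ex_derive_even; [intros; apply Ic_oppu|].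
    apply ex_derive_Ic_inner_pos; lra.
  - apply ex_derive_Ic_inner_pos; lra.
Qed.

Definition Vc_dz (z t : R) : R :=
  -2 * (- 1 / sqrt (1 - (Rabs (sin t) / z) ^ 2)) * (- Rabs (sin t) / (z * z)).

Lemma abs_sin_div_bound (z t : R) : 1 < z -> 0 <= Rabs (sin t) / z < 1.
Proof.
  intros Hz. assert (Hs := Rabs_pos (sin t)).
  assert (Hs1 : Rabs (sin t) <= 1) by apply Rabs_le, SIN_bound.
  split; [apply Rdiv_le_0_compat; lra|].
  apply Rlt_div_l; lra.
Qed.

Lemma is_derive_Vc (z t : R) : 1 < z -> is_derive (fun z => Vc z t) z (Vc_dz z t).
Proof.
  intros Hz. unfold Vc, Vc_dz.
  apply is_derive_ext_loc with (fun z => -2 * acos (Rabs (sin t) / z)).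
  { apply locally_Rabs. exists (mkposreal (z - 1) ltac:(lra)). intros y Hy. simpl in Hy.
    apply Rabs_lt_between in Hy. rewrite (Rabs_pos_eq y) by lra. reflexivity. }
  assert (Hb := abs_sin_div_bound z t Hz).
  rewrite Rmult_assoc, (Rmult_comm (- 1 / _)).
  apply (is_derive_scal (fun z => acos (Rabs (sin t) / z))).
  apply (is_derive_comp acos (fun z => Rabs (sin t) / z)); [apply is_derive_acos; lra|].
  auto_derive; [lra | field; lra].
Qed.

Lemma Vc_dz_continuity_2d (z t : R) : 1 < z -> continuity_2d_pt Vc_dz z t.
Proof.
  intros Hz. assert (Hb := abs_sin_div_bound z t Hz). unfold Vc_dz, Rdiv.
  assert (Hq : continuity_2d_pt (fun z t => Rabs (sin t) * / z) z t)
    by (apply continuity_2d_pt_mult; [apply continuity_2d_pt_abs_sin |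
        apply continuity_2d_pt_inv; [apply continuity_2d_pt_id1 | lra]]).
  assert (Hg : 0 < 1 - (Rabs (sin t) * / z) ^ 2) by (unfold Rdiv in Hb; nra).
  apply continuity_2d_pt_mult.
  - apply continuity_2d_pt_mult; [apply continuity_2d_pt_const|].
    apply continuity_2d_pt_mult; [apply continuity_2d_pt_const|].
    apply continuity_2d_pt_inv; [| apply Rgt_not_eq, sqrt_lt_R0, Hg].
    apply continuity_1d_2d_pt_comp with (g := fun z t => 1 - (Rabs (sin t) * / z) ^ 2);
      [apply continuity_pt_sqrt; lra|].
    apply continuity_2d_pt_ext with (fun z t => 1 - (Rabs (sin t) * / z) * (Rabs (sin t) * / z));
      [intros; ring|].
    apply continuity_2d_pt_minus; [apply continuity_2d_pt_const | apply continuity_2d_pt_mult; exact Hq].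
  - apply continuity_2d_pt_mult; [apply continuity_2d_pt_opp, continuity_2d_pt_abs_sin|].
    apply continuity_2d_pt_inv; [|nra].
    apply continuity_2d_pt_mult; apply continuity_2d_pt_id1.
Qed.

Lemma ex_derive_Ic_quarter_gt1 (u0 : R) : 1 < u0 -> ex_derive (fun u => Ic u 0 (PI / 2)) u0.
Proof.
  intros Hu. eexists. unfold Ic.
  assert (Hnear : forall P : R -> Prop, (forall z, 1 < z -> P z) -> locally u0 P).
  { intros P HP. apply locally_Rabs. exists (mkposreal (u0 - 1) ltac:(lra)).
    intros y Hy. simpl in Hy. apply Rabs_lt_between in Hy. apply HP. lra. }
  apply (is_derive_RInt_param Vc).
  - apply Hnear. intros z Hz t _. eexists. apply is_derive_Vc, Hz.
  - intros t _. apply continuity_2d_pt_ext_loc with Vc_dz; [|apply Vc_dz_continuity_2d, Hu].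
    exists (mkposreal (u0 - 1) ltac:(lra)). intros z v Hz _. simpl in Hz.
    apply Rabs_lt_between in Hz. symmetry. apply is_derive_unique, is_derive_Vc. lra.
  - apply Hnear. intros z Hz. apply ex_RInt_Vc. lra.
Qed.

Lemma asin_pos_lt (u : R) : 0 < u < 1 -> 0 < asin u < PI / 2.
Proof.
  intros H. assert (Hb := asin_bound_lt u ltac:(lra)).
  split; [|lra]. apply Rnot_le_lt. intros Hle.
  assert (Hs : sin (asin u) <= sin 0) by (apply sin_incr_1; lra).
  rewrite sin_asin, sin_0 in Hs by lra. lra.
Qed.

(* For 0 < u < 1 the closed form vanishes on [asin u, PI / 2], where |sin s| >= u. *)
Lemma Ic_quarter_lt1 (u : R) : 0 < u < 1 -> Ic u 0 (PI / 2) = RInt (Vsub u) 0 1.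
Proof.
  intros Hu. assert (Ha := asin_pos_lt u Hu).
  assert (Hs := sin_asin u ltac:(lra)).
  rewrite <- (Ic_Chasles u 0 (asin u) (PI / 2)), Ic_subst_sin, Hs by lra.
  replace (u / u) with 1 by (field; lra).
  replace (Ic u (asin u) (PI / 2)) with 0; [ring|].
  unfold Ic. rewrite (RInt_ext _ (fun _ => 0)).
  - rewrite (RInt_const (V := R_CompleteNormedModule)). unfold scal; simpl; unfold mult; simpl. ring.
  - intros x Hx. rewrite Rmin_left, Rmax_right in Hx by lra.
    assert (u < sin x) by (rewrite <- Hs; apply sin_increasing_1; lra).
    unfold Vc. rewrite acos_ge1; [apply Rmult_0_r|].
    rewrite !Rabs_pos_eq by lra. apply Rle_div_r; lra.
Qed.

Lemma ex_derive_Ic_quarter_pos (u0 : R) : 0 < u0 -> u0 <> 1 ->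
  ex_derive (fun u => Ic u 0 (PI / 2)) u0.
Proof.
  intros H0 H1. destruct (Rlt_le_dec 1 u0) as [H|H]; [apply ex_derive_Ic_quarter_gt1, H|].
  eexists. apply is_derive_ext_loc with (fun u => RInt (Vsub u) 0 1).
  - apply locally_Rabs. exists (mkposreal (Rmin u0 (1 - u0)) ltac:(apply Rmin_glb_lt; lra)).
    intros y Hy. simpl in Hy. assert (Rmin u0 (1 - u0) <= u0) by apply Rmin_l.
    assert (Rmin u0 (1 - u0) <= 1 - u0) by apply Rmin_r.
    apply Rabs_lt_between in Hy. symmetry. apply Ic_quarter_lt1. lra.
  - apply is_derive_RInt_Vsub. nra.
Qed.

Lemma ex_derive_Ic_quarter (u0 : R) : u0 <> 0 -> u0 <> 1 -> u0 <> -1 ->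
  ex_derive (fun u => Ic u 0 (PI / 2)) u0.
Proof.
  intros H0 H1 H2. destruct (Rle_lt_dec u0 0) as [Hn|Hp].
  - apply ex_derive_even; [intros; apply Ic_oppu|].
    apply ex_derive_Ic_quarter_pos; lra.
  - apply ex_derive_Ic_quarter_pos; lra.
Qed.

(* Cut the integral at PI / 2 - eta: the inner part is differentiable in u, the rest is O(eta). *)
Lemma continuity_pt_Ic_quarter (u0 : R) : u0 <> 0 -> continuity_pt (fun u => Ic u 0 (PI / 2)) u0.
Proof.
  intros Hu. assert (Hp := PI_RGT_0).
  apply continuity_pt_locally. intros eps.
  assert (He := cond_pos eps).
  set (eta := Rmin (eps / (8 * PI)) (PI / 4)).
  assert (Heta : 0 < eta) by (apply Rmin_glb_lt; [apply Rdiv_lt_0_compat|]; lra).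
  assert (Heta1 : eta <= eps / (8 * PI)) by apply Rmin_l.
  assert (Heta2 : eta <= PI / 4) by apply Rmin_r.
  assert (Hsmall : 2 * PI * eta <= eps / 4).
  { apply Rle_trans with (2 * PI * (eps / (8 * PI))); [apply Rmult_le_compat_l; lra|].
    right; field; lra. }
  set (a := PI / 2 - eta).
  assert (Hc := ex_derive_continuity_pt _ _ (ex_derive_Ic_inner a u0 ltac:(unfold a; lra) Hu)).
  assert (He2 : 0 < eps / 2) by lra.
  apply (continuity_pt_locally (fun u => Ic u 0 a)) with (eps := mkposreal _ He2) in Hc.
  eapply filter_imp; [|apply filter_and; [exact Hc | exact (locally_neq0 u0 Hu)]].
  intros u [H1 H2]. simpl in H1.
  rewrite <- (Ic_Chasles u 0 a (PI / 2)), <- (Ic_Chasles u0 0 a (PI / 2)) by assumption.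
  assert (B1 := Ic_bound u a (PI / 2) H2). assert (B2 := Ic_bound u0 a (PI / 2) Hu).
  replace (PI / 2 - a) with eta in B1, B2 by (unfold a; ring).
  rewrite (Rabs_pos_eq eta) in B1, B2 by lra.
  apply Rabs_lt_between in H1. apply Rabs_le_between in B1. apply Rabs_le_between in B2.
  apply Rabs_lt_between. lra.
Qed.

Lemma V_Ic_0 (l u : R) : u <> 0 -> V l u = / 2 * (Ic u 0 (PI / 2) - Ic u 0 l).
Proof.
  intros Hu. rewrite V_Ic, <- (Ic_Chasles u 0 l (PI / 2)) by exact Hu. ring.
Qed.

(* Reduce l modulo PI into [-PI/2, PI/2) and trade the endpoint -PI/2 for 0. *)
Lemma V_reduce (l : R) : exists r c, - (PI / 2) < r < PI / 2 /\
  forall u, u <> 0 -> V l u = / 2 * (c * Ic u 0 (PI / 2) - Ic u 0 r).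
Proof.
  assert (Hp := PI_RGT_0).
  set (k := Zfloor ((l + PI / 2) / PI)).
  set (r := l - IZR k * PI).
  assert (Hr : - (PI / 2) <= r < PI / 2).
  { destruct (Zfloor_bound ((l + PI / 2) / PI)) as [H1 H2]. fold k in H1, H2.
    apply Rmult_le_compat_r with (r := PI) in H1; [|lra].
    apply Rmult_lt_compat_r with (r := PI) in H2; [|lra].
    replace ((l + PI / 2) / PI * PI) with (l + PI / 2) in H1, H2 by (field; lra).
    unfold r. lra. }
  assert (Hl : forall u, u <> 0 -> V l u = / 2 * ((1 - 2 * IZR k) * Ic u 0 (PI / 2) - Ic u 0 r)).
  { intros u Hu. replace l with (r + IZR k * PI) by (unfold r; ring).
    rewrite V_add_periods, !V_Ic_0, Ic_point by exact Hu. ring. }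
  destruct (Req_dec r (- (PI / 2))) as [E|E].
  - exists 0, (2 - 2 * IZR k). split; [lra|]. intros u Hu.
    rewrite Hl, E, Ic_point by exact Hu.
    replace (Ic u 0 (- (PI / 2))) with (Ic u (- 0) (- (PI / 2))) by (f_equal; ring).
    rewrite Ic_opp by exact Hu. ring.
  - exists r, (1 - 2 * IZR k). split; [lra | exact Hl].
Qed.

Lemma ex_derive_V_u (l u0 : R) : u0 <> 0 -> u0 <> 1 -> u0 <> -1 ->
  ex_derive (fun u => V l u) u0.
Proof.
  intros H0 H1 H2. destruct (V_reduce l) as [r [c [Hr HV]]].
  apply ex_derive_ext_loc with (fun u => / 2 * (c * Ic u 0 (PI / 2) - Ic u 0 r)).
  { eapply filter_imp; [|exact (locally_neq0 u0 H0)]. intros u Hu. symmetry; apply HV, Hu. }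
  apply ex_derive_scal.
  apply (ex_derive_minus (K := R_AbsRing) (V := R_NormedModule) (fun u => c * Ic u 0 (PI / 2))).
  - apply ex_derive_scal, ex_derive_Ic_quarter; assumption.
  - apply ex_derive_Ic_inner; assumption.
Qed.

Lemma continuity_pt_V_u (l u0 : R) : u0 <> 0 -> continuity_pt (fun u => V l u) u0.
Proof.
  intros H0. destruct (V_reduce l) as [r [c [Hr HV]]].
  apply continuity_pt_ext_loc with (fun u => / 2 * (c * Ic u 0 (PI / 2) - Ic u 0 r)).
  { eapply filter_imp; [|exact (locally_neq0 u0 H0)]. intros u Hu. symmetry; apply HV, Hu. }
  apply continuity_pt_scal, continuity_pt_minus.
  - apply continuity_pt_scal, continuity_pt_Ic_quarter, H0.
  - apply ex_derive_continuity_pt, ex_derive_Ic_inner; assumption.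
Qed.

(** * Joint regularity of V *)

Lemma V_RInt_quarter (l u : R) : u <> 0 -> V l u = RInt (fun t => - / 2 * Vc u t) (PI / 2) l.
Proof.
  intros Hu. rewrite (RInt_scal (V := R_CompleteNormedModule)) by apply ex_RInt_Vc, Hu.
  rewrite V_Ic by exact Hu. change (RInt (Vc u) (PI / 2) l) with (Ic u (PI / 2) l).
  rewrite (Ic_swap u l) by exact Hu. unfold scal; simpl; unfold mult; simpl. ring.
Qed.

Lemma differentiable_V (l0 u0 : R) : u0 <> 0 -> u0 <> 1 -> u0 <> -1 ->
  exists a b, differentiable_pt_lim V l0 u0 a b.
Proof.
  intros H0 H1 H2.
  destruct (ex_derive_V_u l0 u0 H0 H1 H2) as [c Hc].
  set (h := fun u t => - / 2 * Vc u t).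
  assert (Hnz : locally_2d (fun _ u => u <> 0) l0 u0).
  { exists (mkposreal (Rabs u0) ltac:(apply Rabs_pos_lt, H0)). intros l u _ Hu ->.
    simpl in Hu. rewrite Rminus_0_l, Rabs_Ropp in Hu. lra. }
  exists (h u0 l0), c.
  apply differentiable_pt_lim_ext with (fun x u => RInt (h u) (PI / 2) x).
  { eapply locally_2d_impl; [|exact Hnz]. apply locally_2d_forall. intros l u Hu.
    symmetry. apply V_RInt_quarter, Hu. }
  apply differentiable_pt_lim_RInt_param.
  - destruct Hnz as [d Hd]. exists d. intros u x Hu Hx.
    apply (ex_RInt_scal (V := R_NormedModule)), ex_RInt_Vc, (Hd x u Hx Hu).
  - apply continuity_2d_pt_mult; [apply continuity_2d_pt_const | apply Vc_continuity_2d, H0].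
  - apply is_derive_ext_loc with (fun u => V l0 u); [|exact Hc].
    eapply filter_imp; [|exact (locally_neq0 u0 H0)]. intros u Hu. apply V_RInt_quarter, Hu.
Qed.

(* Continuity in u at fixed l, plus a Lipschitz bound in l that is uniform in u. *)
Lemma continuity_2d_V (l0 u0 : R) : u0 <> 0 -> continuity_2d_pt V l0 u0.
Proof.
  intros H0 eps. assert (He := cond_pos eps). assert (Hp := PI_RGT_0).
  assert (He2 : 0 < eps / 2) by lra.
  destruct (proj1 (continuity_pt_locally (fun u => V l0 u) u0) (continuity_pt_V_u l0 u0 H0)
              (mkposreal _ He2)) as [d1 Hd1].
  set (d := Rmin d1 (Rmin (Rabs u0) (eps / (4 * PI)))).
  assert (Hdd1 : d <= d1) by apply Rmin_l.
  assert (Hdd2 : d <= Rabs u0) by (eapply Rle_trans; [apply Rmin_r | apply Rmin_l]).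
  assert (Hdd3 : d <= eps / (4 * PI)) by (eapply Rle_trans; [apply Rmin_r | apply Rmin_r]).
  assert (Hd : 0 < d).
  { repeat apply Rmin_glb_lt; [apply cond_pos | apply Rabs_pos_lt, H0 | apply Rdiv_lt_0_compat; lra]. }
  exists (mkposreal d Hd). intros l u Hl Hu. simpl in Hl, Hu.
  assert (Hu0 : u <> 0) by (intros ->; rewrite Rminus_0_l, Rabs_Ropp in Hu; lra).
  assert (B1 : Rabs (V l0 u - V l0 u0) < eps / 2) by (apply Hd1; change (Rabs (u - u0) < d1); lra).
  assert (B2 : Rabs (V l u - V l0 u) <= eps / 2).
  { rewrite !V_Ic, <- (Ic_Chasles u l l0 (PI / 2)) by exact Hu0.
    replace (/ 2 * (Ic u l l0 + Ic u l0 (PI / 2)) - / 2 * Ic u l0 (PI / 2)) with (/ 2 * Ic u l l0) by ring.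
    rewrite Rabs_mult, Rabs_pos_eq by lra.
    assert (Hb := Ic_bound u l l0 Hu0). rewrite Rabs_minus_sym in Hb.
    assert (2 * PI * Rabs (l - l0) <= 2 * PI * (eps / (4 * PI))) by (apply Rmult_le_compat_l; lra).
    replace (2 * PI * (eps / (4 * PI))) with (eps / 2) in H by (field; lra).
    lra. }
  replace (V l u - V l0 u0) with ((V l u - V l0 u) + (V l0 u - V l0 u0)) by ring.
  eapply Rle_lt_trans; [apply Rabs_triang | lra].
Qed.

Lemma continuous_V2 (p : R * R) : snd p <> 0 -> continuous V2 p.
Proof.
  destruct p as [l u]. simpl. intros Hu.
  apply (continuity_2d_pt_filterlim V l u), continuity_2d_V, Hu.
Qed.

Lemma ex_filterdiff_V2 (p : R * R) : snd p <> 0 -> snd p <> 1 -> snd p <> -1 ->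
  ex_filterdiff V2 (locally p).
Proof.
  destruct p as [l u]. simpl. intros H0 H1 H2.
  destruct (differentiable_V l u H0 H1 H2) as [a [b Hd]].
  eexists. apply (filterdiff_differentiable_pt_lim V l u a b), Hd.
Qed.

(* The segments [-n, n] x {(-1)^n} have area 0 and cover the lines u = 1 and u = -1. *)
Lemma null2_V2_not_differentiable :
  null2 (fun p : R * R => snd p <> 0 /\ ~ ex_filterdiff V2 (locally p)).
Proof.
  intros eps Heps.
  exists (fun n => - INR n), (fun n => INR n), (fun n => (-1) ^ n), (fun n => (-1) ^ n).
  split; [|split].
  - intros n. split; [|lra]. assert (H := pos_INR n). lra.
  - intros [l u] [H0 Hnd]. simpl in *.
    destruct (nfloor_ex (Rabs l) (Rabs_pos l)) as [N HN].
    assert (Hl : forall m, (S N <= m)%nat -> - INR m <= l <= INR m).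
    { intros m Hm. apply le_INR in Hm. rewrite S_INR in Hm. apply Rabs_le_between. lra. }
    destruct (Req_dec u 1) as [E1|E1]; [|destruct (Req_dec u (-1)) as [E2|E2]].
    + exists (2 * S N)%nat. rewrite pow_1_even, E1. split; [apply Hl; lia | lra].
    + exists (S (2 * S N))%nat. rewrite pow_1_odd, E2. split; [apply Hl; lia | lra].
    + exfalso. apply Hnd, (ex_filterdiff_V2 (l, u)); assumption.
  - intros N. rewrite sum_eq_R0; [lra | intros n _; ring].
Qed.

Theorem lemma7 :
  ((forall p : R * R, snd p <> 0 -> continuous V2 p) /\
   null2 (fun p : R * R => snd p <> 0 /\ ~ ex_filterdiff V2 (locally p))) /\
  (forall (l u : R), u <> 0 ->
     V l u = V l (- u) /\
     V (PI - l) u = - V l u /\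
     V l u + V (- l) u = 2 * V 0 u /\
     (forall k : Z, V (l + IZR k * PI) u = V l u - 2 * IZR k * V 0 u)).
Proof.
  split; [split; [exact continuous_V2 | exact null2_V2_not_differentiable]|].
  intros l u Hu.
  repeat split; [apply V_oppu | apply V_pi_sub, Hu | apply V_add_opp, Hu |].
  intros k. apply V_add_periods, Hu.
Qed.
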